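(* There is a uniform constant $M>0$ such that for every $n\ge1$, every admissible $\boldsymbol\alpha=(\alpha_1,\dots,\alpha_n)$ with inverse branch $h_{\boldsymbol\alpha}=h_{\alpha_1}\circ\dots\circ h_{\alpha_n}$, every unit tangent vector $v$ and every $z\in T^nO_{\boldsymbol\alpha}$, $$|\partial_vJ_{\boldsymbol\alpha}(z)|\le M|J_{\boldsymbol\alpha}(z)|,$$ where $\partial_v$ denotes the directional derivative.
   Context: Fix $d\in\{1,2,3,7,11\}$, $\mathcal O$ the ring of integers of $\mathbb Q(\sqrt{-d})$ ($\mathbb Z[\sqrt{-d}]$ if $d\not\equiv3\bmod4$, $\mathbb Z[\frac{1+\sqrt{-d}}2]$ if $d\equiv3\bmod4$). $I\subset\mathbb C$ is $\{x+iy:|x|\le1/2,|y|\le\sqrt d/2\}$ if $d=1,2$ and $\{x+iy:|x|\le1/2,|y\pm x/\sqrt d|\le\frac{d+1}{4\sqrt d}\}$ if $d=3,7,11$; $I'=I\setminus\bigcup_\beta(I+\beta)$, $\beta\in\{1,\sqrt{-d}\}$ ($d=1,2$) or $\{1,\frac{1\pm\sqrt{-d}}2\}$ ($d=3,7,11$); $[z]\in\mathcal O$ is the unique element with $z-[z]\in I'$. $T(z)=1/z-[1/z]$ ($z\ne0$), $T(0)=0$; digits $\alpha_j(z)=[1/T^{j-1}(z)]$. For $\alpha\in\mathcal O$, $O_\alpha=\{z\in I\setminus\{0\}:[1/z]=\alpha\}$, and for non-empty $O_\alpha$, $h_\alpha:TO_\alpha\to O_\alpha$, $h_\alpha(z)=1/(z+\alpha)$.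 For $\boldsymbol\alpha\in\mathcal O^n$, $O_{\boldsymbol\alpha}=\{z\in I:\alpha_j(z)=\alpha_j,\ j\le n\}$; $\boldsymbol\alpha$ is admissible if $O_{\boldsymbol\alpha}\ne\emptyset$, and then $h_{\boldsymbol\alpha}:T^nO_{\boldsymbol\alpha}\to O_{\boldsymbol\alpha}$. $J_{\boldsymbol\alpha}$ is the Jacobian determinant of $h_{\boldsymbol\alpha}$ viewed as a map of $\mathbb R^2$, i.e. $J_{\boldsymbol\alpha}(z)=|h_{\boldsymbol\alpha}'(z)|^2$. *)

From Stdlib Require Import Reals Lra List ClassicalEpsilon ClassicalDescription.
From Coquelicot Require Import Coquelicot.
Open Scope R_scope.

(* d is one of 1,2,3,7,11; the case d = 3 mod 4 uses Z[(1+sqrt(-d))/2]. *)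
Definition d3 (d : nat) : bool := Nat.eqb (Nat.modulo d 4) 3.

Definition inO (d : nat) (w : C) : Prop :=
  exists a b : Z,
    if d3 d then w = (IZR a + IZR b / 2, IZR b * sqrt (INR d) / 2)
    else w = (IZR a, IZR b * sqrt (INR d)).

Definition inI (d : nat) (w : C) : Prop :=
  let x := fst w in let y := snd w in
  if d3 d then
    Rabs x <= 1/2 /\
    Rabs (y + x / sqrt (INR d)) <= (INR d + 1) / (4 * sqrt (INR d)) /\
    Rabs (y - x / sqrt (INR d)) <= (INR d + 1) / (4 * sqrt (INR d))
  else Rabs x <= 1/2 /\ Rabs y <= sqrt (INR d) / 2.

Definition betas (d : nat) : list C :=
  if d3 d then (1, 0) :: (1/2, sqrt (INR d) / 2) :: (1/2, - (sqrt (INR d) / 2)) :: nil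
  else (1, 0) :: (0, sqrt (INR d)) :: nil.

Definition inI' (d : nat) (w : C) : Prop :=
  inI d w /\ forall b, In b (betas d) -> ~ inI d (Cminus w b).

Definition floorO (d : nat) (z : C) : C :=
  epsilon (inhabits (RtoC 0)) (fun a => inO d a /\ inI' d (Cminus z a)).

Definition Tmap (d : nat) (z : C) : C :=
  if excluded_middle_informative (z = RtoC 0) then RtoC 0
  else Cminus (Cinv z) (floorO d (Cinv z)).

Definition digit (d : nat) (j : nat) (z : C) : C :=
  floorO d (Cinv (Nat.iter (j - 1) (Tmap d) z)).

Definition inOalpha (d : nat) (al : list C) (z : C) : Prop :=
  inI d z /\
  forall j, (1 <= j <= length al)%nat ->
    Nat.iter (j - 1) (Tmap d) z <> RtoC 0 /\
    digit d j z = nth (j - 1) al (RtoC 0).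

Definition admissible (d : nat) (al : list C) : Prop :=
  exists z, inOalpha d al z.

Definition inTnOalpha (d : nat) (al : list C) (z : C) : Prop :=
  exists w, inOalpha d al w /\ Nat.iter (length al) (Tmap d) w = z.

Definition hbranch (al : list C) (z : C) : C :=
  fold_right (fun a w => Cinv (Cplus w a)) z al.

Definition jacobian (f : C -> C) (z : C) : R :=
  let ux := Derive (fun t => fst (f (t, snd z))) (fst z) in
  let uy := Derive (fun t => fst (f (fst z, t))) (snd z) in
  let vx := Derive (fun t => snd (f (t, snd z))) (fst z) in
  let vy := Derive (fun t => snd (f (fst z, t))) (snd z) in
  ux * vy - uy * vx.

Definition Jalpha (al : list C) (z : C) : R := jacobian (hbranch al) z.

Definition along (J : C -> R) (z v : C) (t : R) : R :=
  J (fst z + t * fst v, snd z + t * snd v).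

From Stdlib Require Import Reals List Lra Psatz Lia ClassicalEpsilon ClassicalDescription.
From Coquelicot Require Import Coquelicot.
Open Scope R_scope.

(* h_alpha = h_{alpha_1} o ... o h_{alpha_n} is a Moebius map z |-> (Az+B)/(Cz+D) of
   determinant +-1, so J_alpha(z) = |h_alpha'(z)|^2 = |Cz+D|^-4 and
   d/dt J_alpha(z+tv) = -4 Re(conj(Cz+D) C v) / |Cz+D|^6, whence
   |d_v J_alpha| <= 4 |C|/|Cz+D| J_alpha.  The ratio |C|/|Cz+D| is bounded uniformly:
   the points T^j w (j < n) of the orbit lie in I, which sits in the disk of radius
   rho = 19/20, and removing the last digit shows |C| <= rho/(1-rho) |Cz+D| by induction.
   That T^j w returns to I needs [zeta] to exist, i.e. that the translates of I' by O
   cover the plane, which is checked in lattice coordinates for each shape of I. *)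

Record mobius := Mobius { mob_a : C; mob_b : C; mob_c : C; mob_d : C }.

Definition mob_den (m : mobius) (z : C) : C := (mob_c m * z + mob_d m)%C.
Definition mob_apply (m : mobius) (z : C) : C := ((mob_a m * z + mob_b m) / mob_den m z)%C.
Definition mob_det (m : mobius) : C := (mob_a m * mob_d m - mob_b m * mob_c m)%C.
Definition mob_deriv (m : mobius) (z : C) : C := (mob_det m / (mob_den m z * mob_den m z))%C.

Lemma sum_sq_neq0 (w : C) : w <> 0%C -> fst w ^ 2 + snd w ^ 2 <> 0.
Proof.
  intros Hw. rewrite <- Cmod2_alt. apply pow_nonzero.
  apply Rgt_not_eq, Cmod_gt_0, Hw.
Qed.

Lemma mob_apply_line_derive (m : mobius) (p u : C) :
  mob_den m p <> 0%C ->
  is_derive (fun t => fst (mob_apply m (p + RtoC t * u)%C)) 0 (fst (mob_deriv m p * u)%C) /\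
  is_derive (fun t => snd (mob_apply m (p + RtoC t * u)%C)) 0 (snd (mob_deriv m p * u)%C).
Proof.
  intros Hden. apply sum_sq_neq0 in Hden.
  destruct m as [[a1 a2] [b1 b2] [c1 c2] [d1 d2]], p as [x y], u as [u1 u2].
  unfold mob_apply, mob_deriv, mob_det, mob_den in *; simpl in *.
  assert (Hw : (c1 * x + - (c2 * y) + d1) * (c1 * x + - (c2 * y) + d1)
               + (c1 * y + c2 * x + d2) * (c1 * y + c2 * x + d2) <> 0)
    by (intro E; apply Hden; nra).
  split; auto_derive;
    rewrite ?Rmult_0_l, ?Rmult_1_l, ?Rmult_1_r, ?Ropp_0, ?Rplus_0_l, ?Rplus_0_r; try tauto.
  all: field; split; [intro E; apply Hw; nra | exact Hw].
Qed.

Definition is_line_C_derive (f : C -> C) (z l : C) : Prop :=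
  forall u : C,
    is_derive (fun t => fst (f (z + RtoC t * u)%C)) 0 (fst (l * u)%C) /\
    is_derive (fun t => snd (f (z + RtoC t * u)%C)) 0 (snd (l * u)%C).

Lemma Derive_along_line (g : C -> R) (p u : C) (line : R -> C) (t0 l : R) :
  (forall t, line t = (p + RtoC (t - t0) * u)%C) ->
  is_derive (fun t => g (p + RtoC t * u)%C) 0 l ->
  Derive (fun t => g (line t)) t0 = l.
Proof.
  intros Hline H. apply is_derive_unique.
  apply (is_derive_ext (fun t => g (p + RtoC (t - t0) * u)%C));
    [intros t; now rewrite Hline|].
  replace l with (scal 1 l) by exact (Rmult_1_l l).
  apply (is_derive_comp (fun s => g (p + RtoC s * u)%C) (fun t => t - t0)).
  - now replace (t0 - t0) with 0 by ring.
  - auto_derive; [exact I | ring].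
Qed.

Lemma jacobian_line_C_derive (f : C -> C) (z l : C) :
  is_line_C_derive f z l -> jacobian f z = Cmod l ^ 2.
Proof.
  intros Hf. destruct (Hf (1, 0)) as [Hx1 Hx2], (Hf (0, 1)) as [Hy1 Hy2].
  assert (Lx : forall t, (t, snd z) = (z + RtoC (t - fst z) * (1, 0))%C).
  { intros t. destruct z. unfold Cplus, Cmult, RtoC; simpl; f_equal; ring. }
  assert (Ly : forall t, (fst z, t) = (z + RtoC (t - snd z) * (0, 1))%C).
  { intros t. destruct z. unfold Cplus, Cmult, RtoC; simpl; f_equal; ring. }
  unfold jacobian.
  rewrite (Derive_along_line (fun w => fst (f w)) _ _ (fun t => (t, snd z)) _ _ Lx Hx1),
    (Derive_along_line (fun w => snd (f w)) _ _ (fun t => (t, snd z)) _ _ Lx Hx2),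
    (Derive_along_line (fun w => fst (f w)) _ _ (fun t => (fst z, t)) _ _ Ly Hy1),
    (Derive_along_line (fun w => snd (f w)) _ _ (fun t => (fst z, t)) _ _ Ly Hy2).
  rewrite Cmod2_alt. destruct l. simpl. ring.
Qed.

Fixpoint branch_mobius (al : list C) : mobius :=
  match al with
  | nil => Mobius 1 0 0 1
  | a :: al' =>
      let m := branch_mobius al' in
      Mobius (mob_c m) (mob_d m) (mob_a m + a * mob_c m) (mob_b m + a * mob_d m)
  end.

Fixpoint branch_defined (al : list C) (z : C) : Prop :=
  match al with
  | nil => True
  | a :: al' => branch_defined al' z /\ mob_den (branch_mobius (a :: al')) z <> 0%C
  end.

Lemma branch_defined_den (al : list C) (z : C) :
  branch_defined al z -> mob_den (branch_mobius al) z <> 0%C.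
Proof.
  destruct al as [|a al]; simpl; [|tauto].
  intros _. unfold mob_den; simpl. rewrite Cmult_0_l, Cplus_0_l.
  apply C1_nz.
Qed.

Lemma hbranch_mobius (al : list C) (z : C) :
  branch_defined al z -> hbranch al z = mob_apply (branch_mobius al) z.
Proof.
  induction al as [|a al IH]; simpl; intros H.
  - unfold mob_apply, mob_den; simpl. field.
  - destruct H as [Hal Hden]. rewrite (IH Hal).
    pose proof (branch_defined_den _ _ Hal) as Hal'.
    unfold mob_apply, mob_den in *; simpl in *.
    set (m := branch_mobius al) in *.
    replace ((mob_a m * z + mob_b m) / (mob_c m * z + mob_d m) + a)%C
      with (((mob_a m + a * mob_c m) * z + (mob_b m + a * mob_d m)) / (mob_c m * z + mob_d m))%C
      by (field; exact Hal').
    field. now split.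
Qed.

Lemma Cmod_mob_det_branch (al : list C) : Cmod (mob_det (branch_mobius al)) = 1.
Proof.
  induction al as [|a al IH]; unfold mob_det in *; simpl.
  - replace (1 * 1 - 0 * 0)%C with (RtoC 1) by ring. apply Cmod_1.
  - rewrite <- IH, <- Cmod_opp. f_equal. ring.
Qed.

Lemma line_neq0_near (W q : C) :
  W <> 0%C -> locally 0 (fun t : R => (W + RtoC t * q)%C <> 0%C).
Proof.
  intros HW. apply Cmod_gt_0 in HW. pose proof (Cmod_ge_0 q) as Hq.
  assert (He : 0 < Cmod W / (Cmod q + 1)) by (apply Rdiv_lt_0_compat; lra).
  exists (mkposreal _ He). intros t Ht E.
  change (Rabs (t - 0) < Cmod W / (Cmod q + 1)) in Ht. rewrite Rminus_0_r in Ht.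
  assert (Hsmall : Rabs t * (Cmod q + 1) < Cmod W).
  { apply (Rmult_lt_compat_r (Cmod q + 1)) in Ht; [|lra].
    unfold Rdiv in Ht. now rewrite Rmult_assoc, Rinv_l, Rmult_1_r in Ht by lra. }
  assert (Htri : Cmod W <= Cmod (W + RtoC t * q)%C + Cmod (- (RtoC t * q))%C).
  { replace W with ((W + RtoC t * q) + - (RtoC t * q))%C at 1 by ring.
    apply Cmod_triangle. }
  rewrite E, Cmod_0, Cmod_opp, Cmod_mult, Cmod_R in Htri.
  pose proof (Rabs_pos t). nra.
Qed.

Lemma mob_den_line (m : mobius) (z u : C) (t : R) :
  mob_den m (z + RtoC t * u)%C = (mob_den m z + RtoC t * (mob_c m * u))%C.
Proof. unfold mob_den. ring. Qed.

Lemma branch_defined_near (al : list C) (z u : C) :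
  branch_defined al z -> locally 0 (fun t : R => branch_defined al (z + RtoC t * u)%C).
Proof.
  induction al as [|a al IH]; cbn [branch_defined]; intros H.
  - apply filter_true.
  - destruct H as [Hal Hden]. apply filter_and; [now apply IH|].
    set (m := branch_mobius (a :: al)) in *.
    apply (filter_imp (fun t : R => (mob_den m z + RtoC t * (mob_c m * u))%C <> 0%C)).
    + intros t Ht. now rewrite mob_den_line.
    + now apply line_neq0_near.
Qed.

Lemma hbranch_line_C_derive (al : list C) (z : C) :
  branch_defined al z -> is_line_C_derive (hbranch al) z (mob_deriv (branch_mobius al) z).
Proof.
  intros H u.
  assert (Hloc : locally 0 (fun t : R =>
            mob_apply (branch_mobius al) (z + RtoC t * u)%C = hbranch al (z + RtoC t * u)%C)).
  { apply (filter_imp _ _ (fun t Ht => eq_sym (hbranch_mobius _ _ Ht))).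
    now apply branch_defined_near. }
  destruct (mob_apply_line_derive (branch_mobius al) z u (branch_defined_den _ _ H)) as [D1 D2].
  split; [eapply is_derive_ext_loc, D1 | eapply is_derive_ext_loc, D2];
    apply (filter_imp _ _ (fun t Ht => f_equal _ Ht) Hloc).
Qed.

Lemma Jalpha_branch (al : list C) (z : C) :
  branch_defined al z -> Jalpha al z = / Cmod (mob_den (branch_mobius al) z) ^ 4.
Proof.
  intros H. pose proof (branch_defined_den _ _ H) as Hden.
  unfold Jalpha. rewrite (jacobian_line_C_derive _ _ _ (hbranch_line_C_derive _ _ H)).
  unfold mob_deriv. rewrite Cmod_div, Cmod_mult, Cmod_mob_det_branch.
  - apply Cmod_gt_0 in Hden. field. lra.
  - now apply Cmult_neq_0.
Qed.

Lemma along_line (J : C -> R) (z v : C) (t : R) :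
  along J z v t = J (z + RtoC t * v)%C.
Proof.
  unfold along. f_equal. destruct z, v. unfold Cplus, Cmult, RtoC; simpl. f_equal; ring.
Qed.

Lemma inv_Cmod4_line_derive (W q : C) :
  W <> 0%C ->
  is_derive (fun t => / Cmod (W + RtoC t * q)%C ^ 4) 0 (-4 * Re (Cconj W * q) / Cmod W ^ 6).
Proof.
  intros HW. apply sum_sq_neq0 in HW.
  assert (E4 : forall w, Cmod w ^ 4 = (fst w ^ 2 + snd w ^ 2) ^ 2)
    by (intros w; rewrite <- Cmod2_alt; ring).
  assert (E6 : Cmod W ^ 6 = (fst W ^ 2 + snd W ^ 2) ^ 3)
    by (rewrite <- Cmod2_alt; ring).
  apply (is_derive_ext (fun t => / ((fst W + t * fst q) ^ 2 + (snd W + t * snd q) ^ 2) ^ 2)).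
  { intros t. rewrite E4. destruct W, q. simpl. f_equal. ring. }
  rewrite E6. destruct W as [w1 w2], q as [q1 q2]. simpl in *.
  auto_derive.
  - rewrite !Rmult_0_l, !Rplus_0_r. intro E. apply HW. nra.
  - rewrite !Rmult_0_l, !Rplus_0_r. field. intro E. apply HW. lra.
Qed.

Lemma along_Jalpha_derive_bound (al : list C) (z v : C) (K : R) :
  branch_defined al z -> Cmod v = 1 ->
  Cmod (mob_c (branch_mobius al)) <= K * Cmod (mob_den (branch_mobius al) z) ->
  ex_derive (along (Jalpha al) z v) 0 /\
  Rabs (Derive (along (Jalpha al) z v) 0) <= 4 * K * Rabs (Jalpha al z).
Proof.
  intros H Hv HK.
  set (m := branch_mobius al) in *.
  set (W := mob_den m z) in *. set (q := (mob_c m * v)%C).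
  assert (HW : W <> 0%C) by apply (branch_defined_den _ _ H).
  assert (Hloc : locally 0 (fun t : R =>
            / Cmod (W + RtoC t * q)%C ^ 4 = along (Jalpha al) z v t)).
  { apply (filter_imp (fun t : R => branch_defined al (z + RtoC t * v)%C));
      [|now apply branch_defined_near].
    intros t Ht. rewrite along_line, (Jalpha_branch _ _ Ht), mob_den_line. reflexivity. }
  pose proof (is_derive_ext_loc _ _ _ _ Hloc (inv_Cmod4_line_derive W q HW)) as D.
  split; [eexists; exact D|].
  rewrite (is_derive_unique _ _ _ D), (Jalpha_branch _ _ H). fold m W.
  assert (Hr : 0 < Cmod W) by now apply Cmod_gt_0.
  assert (HX : Rabs (Re (Cconj W * q)) <= K * Cmod W ^ 2).
  { eapply Rle_trans; [apply re_le_Cmod|].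
    rewrite Cmod_mult, Cmod_conj. unfold q. rewrite Cmod_mult, Hv. nra. }
  rewrite (Rabs_pos_eq (/ _)) by (left; apply Rinv_0_lt_compat, pow_lt, Hr).
  replace (-4 * Re (Cconj W * q) / Cmod W ^ 6)
    with (- (4 / Cmod W ^ 6) * Re (Cconj W * q)) by (field; lra).
  rewrite Rabs_mult, Rabs_Ropp, Rabs_pos_eq by (left; apply Rdiv_lt_0_compat, pow_lt; lra).
  replace (4 * K * / Cmod W ^ 4) with (4 / Cmod W ^ 6 * (K * Cmod W ^ 2)) by (field; lra).
  apply Rmult_le_compat_l; [left; apply Rdiv_lt_0_compat, pow_lt; lra | exact HX].
Qed.

Fixpoint digit_orbit (rho : R) (al : list C) (w z : C) : Prop :=
  match al with
  | nil => z = w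
  | a :: al' => w <> 0%C /\ Cmod w <= rho /\ digit_orbit rho al' (/ w - a)%C z
  end.

Lemma digit_orbit_branch (rho : R) (al : list C) (w z : C) :
  digit_orbit rho al w z -> branch_defined al z /\ hbranch al z = w.
Proof.
  revert w. induction al as [|a al IH]; simpl; intros w H; [auto|].
  destruct H as [Hw0 [_ Horb]]. destruct (IH _ Horb) as [Hdef Hh].
  pose proof (branch_defined_den _ _ Hdef) as Hden.
  pose proof (hbranch_mobius _ _ Hdef) as Hmob.
  rewrite Hh in *. split; [split; [exact Hdef|] |].
  - clear Hdef Hh Horb IH. destruct (branch_mobius al) as [A B C0 D].
    unfold mob_apply, mob_den in *; simpl in *.
    replace ((A + a * C0) * z + (B + a * D))%C with (/ w * (C0 * z + D))%C.
    + apply Cmult_neq_0; [|exact Hden].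
      apply Cmod_gt_0. rewrite Cmod_inv by exact Hw0.
      now apply Rinv_0_lt_compat, Cmod_gt_0.
    + replace (/ w)%C with ((A * z + B) / (C0 * z + D) + a)%C by (rewrite <- Hmob; ring).
      field. exact Hden.
  - replace (/ w - a + a)%C with (/ w)%C by ring. field. exact Hw0.
Qed.

Lemma digit_orbit_snoc (rho : R) (al : list C) (b w z : C) :
  digit_orbit rho (al ++ b :: nil) w z ->
  exists u, digit_orbit rho al w u /\ u <> 0%C /\ Cmod u <= rho /\ z = (/ u - b)%C.
Proof.
  revert w. induction al as [|a al IH]; simpl; intros w H.
  - exists w. tauto.
  - destruct H as [Hw0 [Hw Horb]]. destruct (IH _ Horb) as [u Hu]. exists u. tauto.
Qed.

Lemma branch_mobius_snoc (al : list C) (b : C) :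
  branch_mobius (al ++ b :: nil) =
  let m := branch_mobius al in
  Mobius (mob_b m) (mob_a m + b * mob_b m) (mob_d m) (mob_c m + b * mob_d m).
Proof.
  induction al as [|a al IH]; simpl.
  - f_equal; ring.
  - rewrite IH. simpl. f_equal; ring.
Qed.

Lemma den_step_bound (C0 D u : C) (rho : R) :
  0 <= rho < 1 -> Cmod u <= rho ->
  Cmod C0 <= rho / (1 - rho) * Cmod (C0 * u + D) ->
  Cmod D * Cmod u <= rho / (1 - rho) * Cmod (C0 * u + D).
Proof.
  intros Hrho Hu HC.
  pose proof (Cmod_ge_0 u). pose proof (Cmod_ge_0 C0). pose proof (Cmod_ge_0 D).
  pose proof (Cmod_ge_0 (C0 * u + D)).
  set (K := rho / (1 - rho)) in *.
  assert (HK : K * (1 - rho) = rho) by (unfold K; field; lra).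
  assert (HK0 : 0 <= K) by (unfold K; apply Rdiv_le_0_compat; lra).
  (* if |D| > |C| then |C u + D| >= |D| (1 - |u|) >= |D| (1 - rho) *)
  destruct (Rle_or_lt (Cmod D) (Cmod C0)) as [Hle | Hlt].
  - nra.
  - assert (Htri : Cmod D <= Cmod (C0 * u + D) + Cmod C0 * Cmod u).
    { rewrite <- Cmod_mult, <- (Cmod_opp (C0 * u)).
      replace D with ((C0 * u + D) + - (C0 * u))%C at 1 by ring. apply Cmod_triangle. }
    nra.
Qed.

Lemma digit_orbit_den_bound (rho : R) (al : list C) (w z : C) :
  0 <= rho < 1 -> digit_orbit rho al w z ->
  Cmod (mob_c (branch_mobius al)) <= rho / (1 - rho) * Cmod (mob_den (branch_mobius al) z).
Proof.
  intros Hrho. revert w z. induction al as [|b al IH] using rev_ind; intros w z H.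
  - simpl. rewrite Cmod_0.
    apply Rmult_le_pos; [apply Rdiv_le_0_compat; lra | apply Cmod_ge_0].
  - destruct (digit_orbit_snoc _ _ _ _ _ H) as [u [Horb [Hu0 [Hu Hz]]]].
    specialize (IH _ _ Horb).
    rewrite branch_mobius_snoc. unfold mob_den in *. simpl.
    set (C0 := mob_c (branch_mobius al)) in *. set (D := mob_d (branch_mobius al)) in *.
    assert (Hmod : Cmod (D * z + (C0 + b * D))%C * Cmod u = Cmod (C0 * u + D)%C).
    { rewrite <- Cmod_mult. f_equal. rewrite Hz. field. exact Hu0. }
    apply Cmod_gt_0 in Hu0.
    apply (Rmult_le_reg_r (Cmod u)); [exact Hu0|].
    rewrite Rmult_assoc, Hmod. now apply den_step_bound.
Qed.

Lemma digit_orbit_of_iterates (rho : R) (al : list C) (f : nat -> C) :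
  (forall j, (j < length al)%nat ->
     f j <> 0%C /\ Cmod (f j) <= rho /\ f (S j) = (/ f j - nth j al 0)%C) ->
  digit_orbit rho al (f 0%nat) (f (length al)).
Proof.
  revert f. induction al as [|a al IH]; simpl; intros f H; [reflexivity|].
  destruct (H 0%nat ltac:(lia)) as [H0 [H1 H2]].
  split; [exact H0|]. split; [exact H1|]. rewrite <- H2.
  apply (IH (fun j => f (S j))). intros j Hj. apply (H (S j)). lia.
Qed.

Section GaussOrbit.

Variables (d : nat) (rho : R).
Hypothesis floor_exists : forall zeta : C, exists a, inO d a /\ inI' d (zeta - a)%C.
Hypothesis I_in_disk : forall w, inI d w -> Cmod w <= rho.

Lemma Tmap_neq0 (z : C) : z <> 0%C -> Tmap d z = (/ z - floorO d (/ z))%C.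
Proof.
  intros Hz. unfold Tmap.
  destruct (excluded_middle_informative (z = RtoC 0)); [contradiction | reflexivity].
Qed.

Lemma Tmap_in_I (z : C) : z <> 0%C -> inI d (Tmap d z).
Proof.
  intros Hz. rewrite (Tmap_neq0 _ Hz).
  apply (epsilon_spec (inhabits (RtoC 0)) (fun a => inO d a /\ inI' d (/ z - a)%C)).
  apply floor_exists.
Qed.

Lemma inOalpha_digit_orbit (al : list C) (w : C) :
  inOalpha d al w -> digit_orbit rho al w (Nat.iter (length al) (Tmap d) w).
Proof.
  intros [HwI Hdig].
  apply (digit_orbit_of_iterates rho al (fun j => Nat.iter j (Tmap d) w)).
  intros j Hj. destruct (Hdig (S j) ltac:(lia)) as [Hnz Hdj].
  rewrite Nat.sub_1_r in Hnz, Hdj. simpl in Hnz, Hdj.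
  split; [exact Hnz|]. split.
  - apply I_in_disk. destruct j as [|j]; [exact HwI|].
    apply Tmap_in_I. destruct (Hdig (S j) ltac:(lia)) as [Hnz' _].
    now rewrite Nat.sub_1_r in Hnz'.
  - simpl. rewrite (Tmap_neq0 _ Hnz), <- Hdj. unfold digit. now rewrite Nat.sub_1_r.
Qed.

End GaussOrbit.

Lemma Rabs_div_le_iff (P Q s : R) : 0 < s -> Rabs (P / s) <= Q / s <-> Rabs P <= Q.
Proof.
  intros Hs. unfold Rdiv. rewrite Rabs_mult, (Rabs_pos_eq (/ s)) by (left; now apply Rinv_0_lt_compat).
  split; intros H.
  - apply (Rmult_le_reg_r (/ s)); [now apply Rinv_0_lt_compat | exact H].
  - apply Rmult_le_compat_r; [left; now apply Rinv_0_lt_compat | exact H].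
Qed.

Lemma floor_exists_rect (d : nat) :
  d3 d = false -> 0 < INR d -> forall zeta : C, exists a, inO d a /\ inI' d (zeta - a)%C.
Proof.
  intros Hd3 Hd [X Y]. set (s := sqrt (INR d)).
  assert (Hs : 0 < s) by now apply sqrt_lt_R0.
  set (m := Int_part (X + 1/2)). set (k := Int_part (Y / s + 1/2)).
  pose proof (base_Int_part (X + 1/2)) as Hm. pose proof (base_Int_part (Y / s + 1/2)) as Hk.
  fold m k in Hm, Hk.
  assert (Hy : - (s / 2) <= Y - IZR k * s < s / 2).
  { replace (Y - IZR k * s) with ((Y / s - IZR k) * s) by (field; lra). split; nra. }
  exists (IZR m, IZR k * s). split.
  - exists m, k. now rewrite Hd3.
  - unfold inI', inI, betas. rewrite Hd3. simpl. fold s.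
    rewrite !Rabs_le_between. split; [lra|].
    intros b [<- | [<- | []]]; simpl; rewrite !Rabs_le_between; lra.
Qed.

Definition hex_closed (dd U V : R) : Prop :=
  - (1 / 2) <= U + V / 2 <= 1 / 2 /\
  - ((dd + 1) / 4) <= U + V * ((dd + 1) / 2) <= (dd + 1) / 4 /\
  - ((dd + 1) / 4) <= V * ((dd - 1) / 2) - U <= (dd + 1) / 4.

Definition hex_half_open (dd U V : R) : Prop :=
  - (1 / 2) <= U + V / 2 < 1 / 2 /\
  - ((dd + 1) / 4) <= U + V * ((dd + 1) / 2) < (dd + 1) / 4 /\
  - ((dd + 1) / 4) < V * ((dd - 1) / 2) - U <= (dd + 1) / 4.

Lemma hex_half_open_fundamental (dd U V : R) :
  hex_half_open dd U V ->
  hex_closed dd U V /\ ~ hex_closed dd (U - 1) V /\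
  ~ hex_closed dd U (V - 1) /\ ~ hex_closed dd (U - 1) (V + 1).
Proof. unfold hex_half_open, hex_closed. intros. nra. Qed.

Lemma hex_half_open_cover_unit (dd p r : R) :
  3 <= dd -> 0 <= p < 1 -> 0 <= r < 1 ->
  hex_half_open dd p r \/ hex_half_open dd (p - 1) r \/
  hex_half_open dd p (r - 1) \/ hex_half_open dd (p - 1) (r - 1).
Proof. unfold hex_half_open. intros. nra. Qed.

Lemma hex_half_open_cover (dd u v : R) :
  3 <= dd -> exists m n : Z, hex_half_open dd (u - IZR m) (v - IZR n).
Proof.
  intros Hdd. pose proof (base_Int_part u) as Hu. pose proof (base_Int_part v) as Hv.
  set (M := Int_part u) in *. set (N := Int_part v) in *.
  destruct (hex_half_open_cover_unit dd (u - IZR M) (v - IZR N)) as [H | [H | [H | H]]];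
    try lra; [exists M, N | exists (M + 1)%Z, N | exists M, (N + 1)%Z | exists (M + 1)%Z, (N + 1)%Z];
    revert H; unfold hex_half_open; rewrite ?plus_IZR; lra.
Qed.

(* [hex_point d U V] is U + V (1 + sqrt(-d))/2. *)
Definition hex_point (d : nat) (U V : R) : C := (U + V / 2, V * sqrt (INR d) / 2).

Lemma inI_hex_point (d : nat) (U V : R) :
  d3 d = true -> 0 < INR d -> inI d (hex_point d U V) <-> hex_closed (INR d) U V.
Proof.
  intros Hd3 Hd. set (s := sqrt (INR d)).
  assert (Hs : 0 < s) by now apply sqrt_lt_R0.
  assert (Hss : s * s = INR d) by now apply sqrt_sqrt, Rlt_le.
  unfold inI, hex_point, hex_closed. rewrite Hd3. simpl. fold s.
  replace (V * s / 2 + (U + V / 2) / s) with ((U + V * ((INR d + 1) / 2)) / s)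
    by (rewrite <- Hss; field; lra).
  replace (V * s / 2 - (U + V / 2) / s) with ((V * ((INR d - 1) / 2) - U) / s)
    by (rewrite <- Hss; field; lra).
  replace ((INR d + 1) / (4 * s)) with ((INR d + 1) / 4 / s) by (field; lra).
  rewrite !Rabs_div_le_iff by exact Hs. rewrite !Rabs_le_between. tauto.
Qed.


Lemma inI'_hex_point (d : nat) (U V : R) :
  d3 d = true -> 0 < INR d -> hex_half_open (INR d) U V -> inI' d (hex_point d U V).
Proof.
  intros Hd3 Hd H. destruct (hex_half_open_fundamental _ _ _ H) as [H0 [H1 [H2 H3]]].
  split; [now apply inI_hex_point|].
  unfold betas. rewrite Hd3. intros b [<- | [<- | [<- | []]]].
  - replace (Cminus (hex_point d U V) (1, 0)) with (hex_point d (U - 1) V)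
      by (unfold hex_point, Cminus, Cplus, Copp; simpl; f_equal; field).
    now rewrite inI_hex_point.
  - replace (Cminus (hex_point d U V) (1 / 2, sqrt (INR d) / 2)) with (hex_point d U (V - 1))
      by (unfold hex_point, Cminus, Cplus, Copp; simpl; f_equal; field).
    now rewrite inI_hex_point.
  - replace (Cminus (hex_point d U V) (1 / 2, - (sqrt (INR d) / 2))) with (hex_point d (U - 1) (V + 1))
      by (unfold hex_point, Cminus, Cplus, Copp; simpl; f_equal; field).
    now rewrite inI_hex_point.
Qed.

Lemma floor_exists_hex (d : nat) :
  d3 d = true -> 3 <= INR d -> forall zeta : C, exists a, inO d a /\ inI' d (zeta - a)%C.
Proof.
  intros Hd3 Hd [X Y]. set (s := sqrt (INR d)).
  assert (Hs : 0 < s) by (apply sqrt_lt_R0; lra).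
  destruct (hex_half_open_cover (INR d) (X - Y / s) (2 * Y / s) Hd) as [m [n Hmn]].
  exists (IZR m + IZR n / 2, IZR n * s / 2). split.
  - exists m, n. now rewrite Hd3.
  - replace (Cminus (X, Y) (IZR m + IZR n / 2, IZR n * s / 2))
      with (hex_point d (X - Y / s - IZR m) (2 * Y / s - IZR n)).
    + apply inI'_hex_point; [exact Hd3 | lra | exact Hmn].
    + unfold hex_point, Cminus, Cplus, Copp. simpl. fold s. f_equal; field; lra.
Qed.

Lemma Cmod_le_of_sum_sq (w : C) (r : R) : 0 <= r -> fst w ^ 2 + snd w ^ 2 <= r ^ 2 -> Cmod w <= r.
Proof.
  intros Hr H. unfold Cmod. rewrite <- (sqrt_pow2 r Hr). now apply sqrt_le_1_alt.
Qed.

Lemma inI_Cmod_le_rect (d : nat) (w : C) :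
  d3 d = false -> 0 < INR d <= 2 -> inI d w -> Cmod w <= 19 / 20.
Proof.
  intros Hd3 Hd. unfold inI. rewrite Hd3. rewrite !Rabs_le_between. intros [Hx Hy].
  assert (Hss : sqrt (INR d) * sqrt (INR d) = INR d) by (apply sqrt_sqrt; lra).
  apply Cmod_le_of_sum_sq; [lra|]. nra.
Qed.

Lemma hexagon_sum_sq_le (dd x Y : R) :
  3 <= dd <= 11 -> - (1 / 2) <= x <= 1 / 2 ->
  - ((dd + 1) / 4) <= Y + x <= (dd + 1) / 4 -> - ((dd + 1) / 4) <= Y - x <= (dd + 1) / 4 ->
  dd * x ^ 2 + Y ^ 2 <= 9 / 10 * dd.
Proof.
  intros Hd Hx H1 H2. set (k := (dd + 1) / 4) in *.
  assert (Ha : exists a, 0 <= a <= 1 / 2 /\ x ^ 2 = a ^ 2 /\ - (k - a) <= Y <= k - a).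
  { destruct (Rle_or_lt 0 x); [exists x | exists (- x)]; repeat split; try lra; ring. }
  destruct Ha as [a [Ha [Hxa HY]]]. rewrite Hxa.
  assert (HY2 : Y ^ 2 <= (k - a) ^ 2) by nra.
  (* the left side is convex in a, so its values at a = 0 and a = 1/2 bound it *)
  assert (Hconv : dd * a ^ 2 + (k - a) ^ 2
                  = (1 - 2 * a) * k ^ 2 + 2 * a * (dd / 4 + (k - 1 / 2) ^ 2)
                    - (dd + 1) * (a * (1 / 2 - a))) by (unfold k; field).
  assert (0 <= a * (1 / 2 - a)) by nra.
  assert (k ^ 2 <= 9 / 10 * dd) by (unfold k; nra).
  assert (dd / 4 + (k - 1 / 2) ^ 2 <= 9 / 10 * dd) by (unfold k; nra).
  nra.
Qed.

Lemma inI_Cmod_le_hex (d : nat) (w : C) :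
  d3 d = true -> 3 <= INR d <= 11 -> inI d w -> Cmod w <= 19 / 20.
Proof.
  intros Hd3 Hd. destruct w as [x y]. unfold inI. rewrite Hd3. simpl.
  set (s := sqrt (INR d)).
  assert (Hs : 0 < s) by (apply sqrt_lt_R0; lra).
  assert (Hss : s * s = INR d) by (apply sqrt_sqrt; lra).
  replace (y + x / s) with ((y * s + x) / s) by (field; lra).
  replace (y - x / s) with ((y * s - x) / s) by (field; lra).
  replace ((INR d + 1) / (4 * s)) with ((INR d + 1) / 4 / s) by (field; lra).
  rewrite !Rabs_div_le_iff, !Rabs_le_between by exact Hs. intros [Hx [H1 H2]].
  pose proof (hexagon_sum_sq_le (INR d) x (y * s) Hd Hx H1 H2) as H.
  apply Cmod_le_of_sum_sq; [lra|]. simpl. nra.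
Qed.

Lemma euclidean_d_cases (d : nat) :
  d = 1%nat \/ d = 2%nat \/ d = 3%nat \/ d = 7%nat \/ d = 11%nat ->
  (d3 d = false /\ 0 < INR d <= 2) \/ (d3 d = true /\ 3 <= INR d <= 11).
Proof.
  intros [-> | [-> | [-> | [-> | ->]]]]; [left | left | right | right | right];
    (split; [reflexivity | simpl; lra]).
Qed.

Theorem proposition2p4 (d : nat)
  (hd : d = 1%nat \/ d = 2%nat \/ d = 3%nat \/ d = 7%nat \/ d = 11%nat) :
  exists M : R, 0 < M /\
    forall (al : list C) (v z : C),
      (1 <= length al)%nat ->
      admissible d al ->
      fst v ^ 2 + snd v ^ 2 = 1 ->
      inTnOalpha d al z ->
      ex_derive (along (Jalpha al) z v) 0 /\
      Rabs (Derive (along (Jalpha al) z v) 0) <= M * Rabs (Jalpha al z).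
Proof.
  assert (Hfloor : forall zeta : C, exists a, inO d a /\ inI' d (zeta - a)%C).
  { destruct (euclidean_d_cases d hd) as [[Hd3 Hd] | [Hd3 Hd]];
      [apply floor_exists_rect | apply floor_exists_hex]; (assumption || lra). }
  assert (Hdisk : forall w, inI d w -> Cmod w <= 19 / 20).
  { intros w. destruct (euclidean_d_cases d hd) as [[Hd3 Hd] | [Hd3 Hd]];
      [apply inI_Cmod_le_rect | apply inI_Cmod_le_hex]; assumption. }
  exists (4 * 19). split; [lra|].
  intros al v z _ _ Hv [w [Hw <-]].
  pose proof (inOalpha_digit_orbit d (19 / 20) Hfloor Hdisk al w Hw) as Horb.
  replace (4 * 19) with (4 * (19 / 20 / (1 - 19 / 20))) by field.
  apply along_Jalpha_derive_bound.
  - exact (proj1 (digit_orbit_branch _ _ _ _ Horb)).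
  - unfold Cmod. rewrite Hv. apply sqrt_1.
  - apply (digit_orbit_den_bound _ _ w); [lra | exact Horb].
Qed.
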